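(* Let $f:X\to\mathcal G$ be convex and $x_0\in\operatorname{dom} f$. If $x_0$ solves the strict set-valued Minty inequality, i.e. $f'(x,x_0-x)\supseteq 0^+f(x_0)$ for all $x\in X$, then it solves the strict scalarized Minty inequality, i.e. $\varphi'_{f,z^*}(x,x_0-x)\le0$ for all $x\in X$ and $z^*\in C^-\setminus\{0\}$. If additionally the weak regularity condition $f'(x,u)=\bigcap_{z^*\in C^-\setminus\{0\}}f'_{z^*}(x,u)$ holds for all $x,u\in X$, then the reverse implication holds as well.
   Context: $X$ real linear space, $Z$ real locally convex Hausdorff space with dual $Z^*$, $C\subseteq Z$ closed convex cone, $0\in C$, $C^-=\{z^*:z^*(c)\le0\ \forall c\in C\}$, $C^-\setminus\{0\}\ne\emptyset$. $\mathcal G=\{A\subseteq Z:A=\operatorname{cl}\operatorname{co}(A+C)\}$; $A\oplus B=\operatorname{cl}\{a+b\}$, $tA=\{ta\}$ ($t>0$), $A\ominus B=\{z:B+\{z\}\subseteq A\}$; $0^+A=\{z:A+\{z\}\subseteq A\}$ for $A\ne\emptyset$. $f$ convex: $f(tx_1+(1-t)x_2)\supseteq tf(x_1)\oplus(1-t)f(x_2)$; $\operatorname{dom}f=\{x:f(x)\neq\emptyset\}$. For $g:X\to\mathcal G$, $g'(x,u)=\bigcap_{t_0>0}\operatorname{cl}\operatorname{co}\bigcup_{0<t<t_0}\frac1t(g(x+tu)\ominus g(x))$. On $\overline{\mathbb R}$: inf-addition $\dot+$ ($(-\infty)\dot+(+\infty)=+\infty$), $r\ominus s=\inf\{t\in\mathbb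 R:r\le s\dot+t\}$ ($\inf\emptyset=+\infty$). $\varphi_{f,z^*}(x)=\inf\{-z^*(z):z\in f(x)\}$ ($+\infty$ if $f(x)=\emptyset$), $\varphi'_{f,z^*}(x,u)=\inf_{t>0}\frac1t(\varphi_{f,z^*}(x+tu)\ominus\varphi_{f,z^*}(x))$. $f_{z^*}(x)=\{z:\varphi_{f,z^*}(x)\le -z^*(z)\}$, and $f'_{z^*}$ is the directional derivative of $f_{z^*}$. *)

From HB Require Import structures.
From mathcomp Require Import all_boot all_order all_algebra.
From mathcomp Require Import all_classical all_reals all_analysis.
Set Implicit Arguments. Unset Strict Implicit. Unset Printing Implicit Defensive.
Import Order.TTheory GRing.Theory Num.Theory.
Import numFieldNormedType.Exports.
Local Open Scope classical_set_scope.
Local Open Scope ring_scope.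

Section Defs.
Variable R : realType.

Definition cvx (M : lmodType R) (A : set M) : Prop :=
  forall a b (t : R), 0 <= t -> t <= 1 -> A a -> A b -> A (t *: a + (1 - t) *: b).

Definition co (M : lmodType R) (A : set M) : set M :=
  \bigcap_(B in [set B : set M | cvx B /\ A `<=` B]) B.

Definition msum (M : lmodType R) (A B : set M) : set M :=
  [set z | exists a b, A a /\ B b /\ z = a + b].

Definition closed_convex_cone (Z : tvsType R) (C : set Z) : Prop :=
  closed C /\ cvx C /\ (forall (t : R) c, 0 < t -> C c -> C (t *: c)).

Definition is_dual (Z : tvsType R) (zs : Z -> R) : Prop :=
  (forall (a : R) (u v : Z), zs (a *: u + v) = a * zs u + zs v) /\ continuous zs.

Definition negdual_nz (Z : tvsType R) (C : set Z) : set (Z -> R) :=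
  [set zs | is_dual zs /\ (forall c, C c -> zs c <= 0) /\ zs <> (fun _ => 0)].

Definition GSpace (Z : tvsType R) (C : set Z) : set (set Z) :=
  [set A | A = closure (co (msum A C))].

Definition oplus (Z : tvsType R) (A B : set Z) : set Z := closure (msum A B).

Definition sscale (M : lmodType R) (t : R) (A : set M) : set M :=
  [set z | exists a, A a /\ z = t *: a].

Definition ominus (M : lmodType R) (A B : set M) : set M :=
  [set z | forall b, B b -> A (b + z)].

Definition rec_cone (M : lmodType R) (A : set M) : set M :=
  [set z | forall a, A a -> A (a + z)].

Definition dom (X : lmodType R) (Z : tvsType R) (f : X -> set Z) : set X :=
  [set x | f x !=set0].

Definition sv_convex (X : lmodType R) (Z : tvsType R) (f : X -> set Z) : Prop :=
  forall x1 x2 (t : R), 0 < t -> t < 1 ->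
    oplus (sscale t (f x1)) (sscale (1 - t) (f x2)) `<=` f (t *: x1 + (1 - t) *: x2).

Definition sv_dir (X : lmodType R) (Z : tvsType R) (g : X -> set Z) (x u : X) : set Z :=
  \bigcap_(t0 in [set t0 : R | 0 < t0])
    closure (co (\bigcup_(t in [set t : R | 0 < t < t0])
                   sscale t^-1 (ominus (g (x + t *: u)) (g x)))).

(* inf-addition on the extended reals: (-oo) + (+oo) = +oo *)
Definition iadd (r s : \bar R) : \bar R := dual_adde r s.

Definition eminus (r s : \bar R) : \bar R :=
  ereal_inf [set (t%:E) | t in [set t : R | (r <= iadd s t%:E)%E]].

Definition phi (X : lmodType R) (Z : tvsType R) (f : X -> set Z) (zs : Z -> R)
    (x : X) : \bar R :=
  ereal_inf [set ((- zs z)%:E) | z in f x].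

Definition phi_dir (X : lmodType R) (h : X -> \bar R) (x u : X) : \bar R :=
  ereal_inf [set ((t^-1)%:E * eminus (h (x + t *: u)%R) (h x))%E
            | t in [set t : R | 0 < t]].

Definition f_zs (X : lmodType R) (Z : tvsType R) (f : X -> set Z) (zs : Z -> R)
    (x : X) : set Z :=
  [set z | (phi f zs x <= (- zs z)%:E)%E].

End Defs.

From HB Require Import structures.
From mathcomp Require Import all_boot all_order all_algebra.
From mathcomp Require Import all_classical all_reals all_analysis.
From mathcomp Require Import ring lra.
Set Implicit Arguments. Unset Strict Implicit. Unset Printing Implicit Defensive.
Import Order.TTheory GRing.Theory Num.Theory.
Import numFieldNormedType.Exports.
Local Open Scope classical_set_scope.
Local Open Scope ring_scope.

(* Part one: w in f(x + t u) (-) f(x) gives phi(x + t u) <= phi(x) - z*(w), so every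
   difference quotient of f lies in the closed half-space
   {z | phi'(x, u) <= -z*(z)}; this half-space is convex, hence contains f'(x, u), and
   0 in f'(x, u) yields phi'(x, u) <= 0.
   Part two: by regularity it suffices to put every z in 0^+ f(x0) into
   f'_{z*}(x, x0 - x).  When phi(x) is finite, z*(z) <= 0 and phi'(x, u) <= 0 together
   with the convexity of phi give arbitrarily short steps s with
   phi(x + s u) <= phi(x) + s sigma; for e with z*(e) = -1 this places z + sigma e in a
   difference quotient of f_{z*}, and sigma -> 0 puts z in its closure.  If
   phi(x) = +oo then f_{z*}(x) is empty, and if phi is -oo at x or x0 it is -oo on the
   open segment, so z itself is a difference quotient. *)


Section TvsLine.
Variables (R : realType) (Z : tvsType R).

Lemma cvg_add_scale (z e : Z) : (fun r : R^o => z + r *: e) @ (0 : R^o) --> z.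
Proof.
have pair_e : (fun r : R^o => (r, e)) @ (0 : R^o) --> ((0 : R^o), e).
  by apply: (@cvg_pair _ _ _ (nbhs (0 : R^o)) (nbhs (0 : R^o)) (nbhs e));
    [exact: cvg_id | exact: cvg_cst].
have := cvg_comp _ _ pair_e (@scale_continuous R Z _); rewrite /= scale0r => scale_e.
have pair_z : (fun r : R^o => (z, r *: e)) @ (0 : R^o) --> (z, 0 : Z).
  by apply: (@cvg_pair _ _ _ (nbhs (0 : R^o)) (nbhs z) (nbhs (0 : Z)));
    [exact: cvg_cst | exact: scale_e].
by have := cvg_comp _ _ pair_z (@add_continuous Z _); rewrite /= addr0.
Qed.

Lemma nbhs_add_scale (z e : Z) (N : set Z) :
  nbhs z N -> exists2 s : R, 0 < s & N (z + s *: e).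
Proof.
move=> /(@cvg_add_scale z e) /nbhs_ballP [d /= d0 Hd].
exists (d / 2); first by lra.
by apply: Hd; rewrite /ball /= sub0r normrN ger0_norm; lra.
Qed.

End TvsLine.

Section AffineIdentities.
Variables (R : pzRingType) (X : lmodType R).

Lemma add_scaleM_convex (x v : X) (l t : R) :
  x + (l * t) *: v = l *: (x + t *: v) + (1 - l) *: x.
Proof. by rewrite scalerDr scalerA scalerBl scale1r addrAC [l *: x + _]addrC subrK. Qed.

Lemma add_scale_subr_convex (x y : X) (t : R) : x + t *: (y - x) = t *: y + (1 - t) *: x.
Proof. by rewrite scalerBr scalerBl scale1r addrCA addrA. Qed.

End AffineIdentities.

Lemma exists_small_factor (R : realFieldType) (t t0 : R) : 0 < t -> 0 < t0 ->
  exists2 l, 0 < l <= 1 / 2 & l * t < t0.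
Proof.
move=> t_gt0 t0_gt0; exists (Num.min (1 / 2) (t0 / (2 * t))).
  by rewrite lt_min ge_min lexx orTb andbT !divr_gt0 ?mulr_gt0.
have : Num.min (1 / 2) (t0 / (2 * t)) <= t0 / (2 * t) by rewrite ge_min lexx orbT.
move=> /(ler_wpM2r (ltW t_gt0)); have -> : t0 / (2 * t) * t = t0 / 2 by field; lra.
by move=> /le_lt_trans; apply; lra.
Qed.

Section DualFunctional.
Variables (R : realType) (Z : tvsType R) (zs : Z -> R).
Hypothesis zs_dual : is_dual zs.

Lemma dual0 : zs 0 = 0.
Proof.
have /eqP := zs_dual.1 1 0 0; rewrite scale1r addr0 mul1r -subr_eq subrr.
by move=> /eqP.
Qed.

Lemma dualD u v : zs (u + v) = zs u + zs v.
Proof. by rewrite -[u]scale1r zs_dual.1 mul1r scale1r. Qed.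

Lemma dualZ a u : zs (a *: u) = a * zs u.
Proof. by rewrite -[a *: u]addr0 zs_dual.1 dual0 addr0. Qed.

Lemma dual_neq0_neg1 : zs <> (fun _ => 0) -> exists e, zs e = -1.
Proof.
move=> zs_neq0; have /existsNP [v zs_v] : ~ forall v, zs v = 0.
  by move=> zs_eq0; apply: zs_neq0; apply/funext.
by exists (- (zs v)^-1 *: v); rewrite dualZ mulNr mulVf //; apply/eqP.
Qed.

Lemma closed_dual_halfspace (d : \bar R) : closed [set z | (d <= (- zs z)%:E)%E].
Proof.
have -> : [set z | (d <= (- zs z)%:E)%E] = zs @^-1` [set r | (d <= (- r)%:E)%E] by [].
apply: (continuous_closedP zs).1 zs_dual.2 _ _.
case: d => [d | |].
- have -> : [set r : R | (d%:E <= (- r)%:E)%E] = [set r | r <= - d].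
    by apply/seteqP; split => r /=; rewrite lee_fin; lra.
  exact: closed_le.
- have -> : [set r : R | (+oo <= (- r)%:E)%E] = set0 by apply/seteqP; split => r //=.
  exact: closed0.
- have -> : [set r : R | (-oo <= (- r)%:E)%E] = setT.
    by apply/seteqP; split => r //= _; rewrite leNye.
  exact: closedT.
Qed.

Lemma cvx_dual_halfspace (d : \bar R) : cvx [set z | (d <= (- zs z)%:E)%E].
Proof.
move=> a b t t0 t1 /=; rewrite dualD !dualZ.
case: d => [d | |].
- by rewrite !lee_fin => da db; nra.
- by rewrite leye_eq => /eqP.
- by rewrite !leNye.
Qed.

End DualFunctional.

Section ExtendedRealResiduation.
Variable R : realType.
Local Open Scope ereal_scope.

Lemma le_iadd_ereal_inf (T : Type) (S : set T) (g : T -> R) (y : \bar R) (c : R) :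
  (forall s, S s -> y <= (g s + c)%:E) ->
  y <= iadd (ereal_inf [set (g s)%:E | s in S]) c%:E.
Proof.
case: y => [y | |] y_le; last by rewrite leNye.
- have : (y - c)%:E <= ereal_inf [set (g s)%:E | s in S].
    by apply/ereal_infP => _ [s Ss <-]; have := y_le s Ss; rewrite !lee_fin; lra.
  case: (ereal_inf _) => [i | |] //=.
  + by rewrite !lee_fin => ?; lra.
  + by move=> _; rewrite /iadd /= leey.
- have : +oo <= ereal_inf [set (g s)%:E | s in S].
    by apply/ereal_infP => _ [s Ss <-]; have := y_le s Ss.
  by rewrite leye_eq => /eqP ->; rewrite /iadd /= leey.
Qed.

Lemma eminus_le (a b : \bar R) (c : R) : a <= iadd b c%:E -> eminus a b <= c%:E.
Proof. by move=> a_le; apply: ereal_inf_lbound; exists c. Qed.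

Lemma eminus_fin_lt (a : \bar R) (r c : R) : eminus a r%:E < c%:E -> a < (r + c)%:E.
Proof.
move=> /ereal_inf_lt [_ [t /= a_le <-]]; rewrite /iadd /= lte_fin in a_le * => t_lt.
by apply: le_lt_trans a_le _; rewrite lte_fin ltrD2l.
Qed.

End ExtendedRealResiduation.

Section DifferenceQuotients.
Variables (R : realType) (X : lmodType R) (Z : tvsType R).
Implicit Types (g : X -> set Z) (x u : X).

Definition dquot g x u (t : R) : set Z := sscale t^-1 (ominus (g (x + t *: u)) (g x)).

Definition dquots g x u (t0 : R) : set Z :=
  \bigcup_(t in [set t : R | 0 < t < t0]) dquot g x u t.

Lemma dquotP g x u (t : R) (y : Z) : 0 < t ->
  (forall b, g x b -> g (x + t *: u) (b + t *: y)) -> dquot g x u t y.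
Proof.
move=> t_gt0 g_step; exists (t *: y); split; first exact: g_step.
by rewrite scalerA mulVf ?gt_eqF // scale1r.
Qed.

Lemma closure_co_subset (A B : set Z) :
  closed A -> cvx A -> B `<=` A -> closure (co B) `<=` A.
Proof.
move=> A_closed A_cvx BA; rewrite [A in _ `<=` A](closure_id A).1 //.
by apply: closureS => z coBz; apply: coBz.
Qed.

Lemma sv_dir_closure_dquots g x u (z : Z) :
  (forall t0, 0 < t0 -> closure (dquots g x u t0) z) -> sv_dir g x u z.
Proof.
move=> dquots_z t0 /= t0_gt0; apply: closureS (dquots_z t0 t0_gt0).
by move=> y dquots_y B [_]; apply.
Qed.

End DifferenceQuotients.

Section Scalarization.
Variables (R : realType) (X : lmodType R) (Z : tvsType R).
Variables (f : X -> set Z) (zs : Z -> R).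
Hypothesis zs_dual : is_dual zs.
Local Notation phi := (phi f zs).

Lemma eminus_phi_le_dual (x y : X) (w : Z) :
  ominus (f y) (f x) w -> (eminus (phi y) (phi x) <= (- zs w)%:E)%E.
Proof.
move=> w_diff; apply: eminus_le.
apply: (@le_iadd_ereal_inf R Z (f x) (fun z => - zs z)) => a fxa.
by apply: ereal_inf_lbound; exists (a + w); [exact: w_diff | rewrite (dualD zs_dual) opprD].
Qed.

Lemma dquots_sub_dual_halfspace (x u : X) (t0 : R) :
  dquots f x u t0 `<=` [set z | (phi_dir phi x u <= (- zs z)%:E)%E].
Proof.
move=> _ [t /= /andP [t_gt0 _] [w [w_diff ->]]] /=.
apply: (@le_trans _ _ ((t^-1)%:E * eminus (phi (x + t *: u)) (phi x))%E).
  by apply: ereal_inf_lbound; exists t.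
rewrite (dualZ zs_dual) -mulrN EFinM lee_pmul2l ?lte_fin ?invr_gt0 //.
exact: eminus_phi_le_dual.
Qed.

Lemma phi_dir_le0_of_sv_dir0 (x u : X) : sv_dir f x u 0 -> (phi_dir phi x u <= 0)%E.
Proof.
move=> /(_ 1 ltr01).
move=> /(closure_co_subset (closed_dual_halfspace zs_dual (d := phi_dir phi x u))
  (cvx_dual_halfspace zs_dual (d := _)) (@dquots_sub_dual_halfspace x u 1)).
by rewrite /= (dual0 zs_dual) oppr0.
Qed.

Lemma rec_cone_dual_le0 (x0 : X) (a z : Z) :
  (-oo < phi x0)%E -> f x0 a -> rec_cone (f x0) z -> zs z <= 0.
Proof.
move=> phi_x0_gtNy fx0a rec_z.
have fx0_ray n : f x0 (a + n%:R *: z).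
  elim: n => [|n IHn]; first by rewrite scale0r addr0.
  by rewrite -natr1 scalerDl scale1r addrA; apply: rec_z.
have : (phi x0 <= (- zs a)%:E)%E by apply: ereal_inf_lbound; exists a.
move: phi_x0_gtNy; case phi_x0 : (phi x0) => [q | |] //= _ _.
have ray_bound n : q <= - zs a - n%:R * zs z.
  have : (q%:E <= (- zs (a + n%:R *: z))%:E)%E.
    by rewrite -phi_x0; apply: ereal_inf_lbound; exists (a + n%:R *: z).
  by rewrite (dualD zs_dual) (dualZ zs_dual) lee_fin; lra.
rewrite leNgt; apply/negP => zs_z_gt0.
pose n := (Num.truncn ((- zs a - q) / zs z)).+1.
have : (- zs a - q) / zs z < n%:R by exact: truncnS_gt.
rewrite ltr_pdivrMr // => n_large.
by have := ray_bound n; lra.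
Qed.

Hypothesis f_convex : sv_convex f.

Lemma phi_convex_lt (x1 x2 : X) (l r1 r2 : R) : 0 < l -> l < 1 ->
  (phi x1 < r1%:E)%E -> (phi x2 < r2%:E)%E ->
  (phi (l *: x1 + (1 - l) *: x2) <= (l * r1 + (1 - l) * r2)%:E)%E.
Proof.
move=> l_gt0 l_lt1 /ereal_inf_lt [_ [a1 fa1 <-] a1_lt] /ereal_inf_lt [_ [a2 fa2 <-] a2_lt].
have f_comb : f (l *: x1 + (1 - l) *: x2) (l *: a1 + (1 - l) *: a2).
  apply: f_convex l_gt0 l_lt1 _ _; apply: subset_closure.
  by exists (l *: a1), ((1 - l) *: a2); split; [exists a1 | split => //; exists a2].
apply: le_trans (ereal_inf_lbound _) _; first by exists (l *: a1 + (1 - l) *: a2).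
rewrite (dualD zs_dual) !(dualZ zs_dual) lee_fin; rewrite !lte_fin in a1_lt a2_lt.
have : 0 < 1 - l by lra.
nra.
Qed.

Lemma phi_convex_Ny (x1 x2 : X) (l : R) : 0 < l -> l < 1 ->
  phi x1 != +oo%E -> phi x2 != +oo%E -> (phi x1 = -oo%E \/ phi x2 = -oo%E) ->
  phi (l *: x1 + (1 - l) *: x2) = -oo%E.
Proof.
have exists_gt (e : \bar R) : e != +oo%E -> exists r : R, (e < r%:E)%E.
  case: e => [r | |] // _; last by exists 0; rewrite ltNye.
  by exists (r + 1); rewrite lte_fin; lra.
move=> l_gt0 l_lt1 phi_x1 phi_x2 phi_Ny; apply: eq_ninfty => M.
case: phi_Ny => [phi_x1_Ny | phi_x2_Ny].
- have [r2 r2_gt] := exists_gt _ phi_x2.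
  have -> : M = l * ((M - (1 - l) * r2) / l) + (1 - l) * r2 by field; lra.
  by apply: phi_convex_lt => //; rewrite phi_x1_Ny ltNye.
- have [r1 r1_gt] := exists_gt _ phi_x1.
  have -> : M = l * r1 + (1 - l) * ((M - l * r1) / (1 - l)) by field; lra.
  by apply: phi_convex_lt => //; rewrite phi_x2_Ny ltNye.
Qed.

Lemma phi_small_step (x u : X) (r sigma t0 : R) :
  phi x = r%:E -> (phi_dir phi x u <= 0)%E -> 0 < sigma -> 0 < t0 ->
  exists2 s, 0 < s < t0 & (phi (x + s *: u) <= (r + s * sigma)%:E)%E.
Proof.
move=> phi_x dir_le0 sigma_gt0 t0_gt0.
have : (phi_dir phi x u < (sigma / 2)%:E)%E.
  by apply: le_lt_trans dir_le0 _; rewrite lte_fin; lra.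
move=> /ereal_inf_lt [_ [t /= t_gt0 <-]].
rewrite lte_pdivrMl // -EFinM phi_x => /eminus_fin_lt phi_xt.
have [l /andP [l_gt0 l_le_half] lt_lt] := exists_small_factor t_gt0 t0_gt0.
have lt_gt0 : 0 < l * t by exact: mulr_gt0.
exists (l * t); first by rewrite lt_gt0.
have phi_x_lt : (phi x < (r + l * t * (sigma / 2))%:E)%E.
  by rewrite phi_x lte_fin ltrDl; apply: mulr_gt0 => //; lra.
rewrite add_scaleM_convex.
apply: le_trans (phi_convex_lt l_gt0 _ phi_xt phi_x_lt) _; first lra.
rewrite lee_fin.
have : 0 <= l * (l * t * sigma) by apply: mulr_ge0; [lra | apply: mulr_ge0; lra].
nra.
Qed.

Lemma closure_dquots_f_zs_fin (x u : X) (r t0 : R) (z : Z) : zs <> (fun _ => 0) ->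
  phi x = r%:E -> (phi_dir phi x u <= 0)%E -> zs z <= 0 -> 0 < t0 ->
  closure (dquots (f_zs f zs) x u t0) z.
Proof.
move=> zs_neq0 phi_x dir_le0 zs_z t0_gt0 N Nz.
have [e zs_e] := dual_neq0_neg1 zs_dual zs_neq0.
have [sigma sigma_gt0 N_ze] := nbhs_add_scale e Nz.
have [s /andP [s_gt0 s_lt] phi_xs] := phi_small_step phi_x dir_le0 sigma_gt0 t0_gt0.
exists (z + sigma *: e); split => //; exists s; first by rewrite /= s_gt0.
apply: dquotP => // b; rewrite /f_zs /= phi_x lee_fin => b_le.
apply: le_trans phi_xs _; rewrite lee_fin !(dualD zs_dual, dualZ zs_dual) zs_e.
have : s * zs z <= 0 by rewrite pmulr_rle0.
nra.
Qed.

Lemma rec_cone_sub_sv_dir_f_zs (x0 x : X) : zs <> (fun _ => 0) -> dom f x0 ->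
  (phi_dir phi x (x0 - x) <= 0)%E -> rec_cone (f x0) `<=` sv_dir (f_zs f zs) x (x0 - x).
Proof.
move=> zs_neq0 [a fx0a] dir_le0 z rec_z; apply: sv_dir_closure_dquots => t0 t0_gt0.
have phi_x0_fin : phi x0 != +oo%E.
  have : (phi x0 <= (- zs a)%:E)%E by apply: ereal_inf_lbound; exists a.
  by case: (phi x0).
have dquot_z (t : R) : 0 < t < t0 ->
    (forall b, f_zs f zs x b -> f_zs f zs (x + t *: (x0 - x)) (b + t *: z)) ->
    closure (dquots (f_zs f zs) x (x0 - x) t0) z.
  move=> /[dup] /andP [t_gt0 _] t_mem f_zs_step; apply: subset_closure.
  by exists t => //; apply: dquotP.
have segment_Ny : phi x != +oo%E -> (phi x0 = -oo%E \/ phi x = -oo%E) ->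
    closure (dquots (f_zs f zs) x (x0 - x) t0) z.
  move=> phi_x_fin phi_Ny.
  have [t_le0 t_le1] : Num.min t0 1 <= t0 /\ Num.min t0 1 <= 1 by rewrite !ge_min !lexx orbT.
  have t_gt0 : 0 < Num.min t0 1 / 2 by rewrite divr_gt0 // lt_min t0_gt0 ltr01.
  apply: (dquot_z (Num.min t0 1 / 2)); first by rewrite t_gt0 /=; lra.
  move=> b _; rewrite /f_zs /= add_scale_subr_convex.
  by rewrite (phi_convex_Ny _ _ phi_x0_fin phi_x_fin phi_Ny) ?leNye //; lra.
case phi_x : (phi x) => [r | |].
- have [phi_x0_Ny | phi_x0_gtNy] := eqVneq (phi x0) -oo%E.
    by apply: segment_Ny; [rewrite phi_x | left].
  apply: closure_dquots_f_zs_fin phi_x dir_le0 _ t0_gt0 => //.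
  by apply: rec_cone_dual_le0 fx0a rec_z; rewrite ltNye.
- apply: (dquot_z (t0 / 2)); first by rewrite divr_gt0 //=; lra.
  by move=> b; rewrite /f_zs /= phi_x leye_eq.
- by apply: segment_Ny; [rewrite phi_x | right].
Qed.

End Scalarization.

Theorem mainTheorem11 (R : realType) (X : lmodType R) (Z : tvsType R)
  (C : set Z) (f : X -> set Z) (x0 : X) :
  hausdorff_space Z ->
  closed_convex_cone C -> C 0 ->
  negdual_nz C !=set0 ->
  (forall x, GSpace C (f x)) ->
  sv_convex f ->
  dom f x0 ->
  ((forall x : X, rec_cone (f x0) `<=` sv_dir f x (x0 - x)) ->
     forall (x : X) (zs : Z -> R), negdual_nz C zs ->
       (phi_dir (phi f zs) x (x0 - x) <= 0)%E)
  /\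
  ((forall x u : X,
      sv_dir f x u = \bigcap_(zs in negdual_nz C) sv_dir (f_zs f zs) x u) ->
   (forall (x : X) (zs : Z -> R), negdual_nz C zs ->
       (phi_dir (phi f zs) x (x0 - x) <= 0)%E) ->
   forall x : X, rec_cone (f x0) `<=` sv_dir f x (x0 - x)).
Proof.
move=> _ _ _ _ _ f_convex x0_dom; split.
- move=> minty x zs [zs_dual _].
  by apply: (phi_dir_le0_of_sv_dir0 zs_dual); apply: minty => a; rewrite addr0.
- move=> regular scalar_minty x z rec_z; rewrite regular => zs zs_negdual.
  have [zs_dual [_ zs_neq0]] := zs_negdual.
  apply: (rec_cone_sub_sv_dir_f_zs zs_dual f_convex zs_neq0 x0_dom) rec_z.
  exact: scalar_minty.
Qed.
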